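(* Let $J^A_{k,n}$ be the number of maximal configurations resistant to altruists of length $n$ with exactly $k$ occupied lots (the empty configuration of length $0$ being counted once). Then, as formal power series, $$\sum_{n\ge 0}\sum_{k\ge 0} J^A_{k,n}x^ky^n = \frac{1+xy+x^2y^2+x^2y^3+x^3y^4}{1-x^2y^3-x^2y^4-x^3y^5} = \frac{1+xy+x^2y^2+x^2y^3+x^3y^4}{(1-xy^2-x^2y^3)(1+xy^2)}.$$
   Context: A configuration of length $n\ge 0$ is a binary string $c_1c_2\cdots c_n$; $c_k=1$ means lot $k$ is occupied by a house, $c_k=0$ that it is empty. A house at position $k$ is blocked if $2\le k\le n-1$ and $c_{k-1}=c_{k+1}=1$ (lots beyond the ends never obstruct sunlight). A configuration is permissible if no house is blocked; maximal if it is permissible and, for every $k$ with $c_k=0$, setting $c_k=1$ yields a non-permissible string. A maximal configuration is resistant to altruists if, for every $k$ with $c_k=0$, setting $c_k=1$ makes some house at a position $l\neq k$ blocked. *)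

From mathcomp Require Import all_boot all_order all_algebra.
Set Implicit Arguments. Unset Strict Implicit. Unset Printing Implicit Defensive.
Import GRing.Theory Num.Theory.

(* Configurations are bit sequences c; lot k (1-indexed in the paper) is
   [nth false c (k-1)] here, i.e. positions are 0-indexed: i < size c. *)

Definition blocked (c : seq bool) (i : nat) : bool :=
  [&& 0 < i, i.+1 < size c, nth false c i, nth false c i.-1 & nth false c i.+1].

Definition permissible (c : seq bool) : bool :=
  [forall i : 'I_(size c), ~~ blocked c i].

Definition build (c : seq bool) (i : nat) : seq bool := set_nth false c i true.

Definition maximal (c : seq bool) : bool :=
  permissible c &&
  [forall i : 'I_(size c), ~~ nth false c i ==> ~~ permissible (build c i)].

Definition resistant (c : seq bool) : bool :=
  maximal c &&
  [forall i : 'I_(size c), ~~ nth false c i ==>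
     [exists l : 'I_(size c), (val l != val i) && blocked (build c i) l]].

Definition JA (k n : nat) : nat :=
  #|[set c : n.-tuple bool | resistant c && (count id c == k)]|.

(* Bivariate formal power series with integer coefficients, as coefficient
   functions  f k n = [x^k y^n] f, with the Cauchy product. *)
Local Open Scope ring_scope.
Definition fps2 := nat -> nat -> int.

Definition fps_mul (f g : fps2) : fps2 := fun k n =>
  (\sum_(i < k.+1) \sum_(j < n.+1) f i j * g (k - i)%N (n - j)%N)%R.

Definition mono (c : int) (a b : nat) : fps2 := fun k n =>
  if (k == a) && (n == b) then c else 0%R.
Definition fps_add (f g : fps2) : fps2 := fun k n => (f k n + g k n)%R.

Definition JA_series : fps2 := fun k n => Posz (JA k n).

Definition numer : fps2 :=
  fps_add (mono 1 0 0) (fps_add (mono 1 1 1) (fps_add (mono 1 2 2)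
    (fps_add (mono 1 2 3) (mono 1 3 4)))).
Definition denom : fps2 :=
  fps_add (mono 1 0 0) (fps_add (mono (-1) 2 3) (fps_add (mono (-1) 2 4)
    (mono (-1) 3 5))).
Definition denom1 : fps2 :=
  fps_add (mono 1 0 0) (fps_add (mono (-1) 1 2) (mono (-1) 2 3)).
Definition denom2 : fps2 := fps_add (mono 1 0 0) (mono 1 1 2).

(* A lot i is fine ([resistant_at c i]) when its house, if any, is not blocked
   and, when it is empty, building on it blocks a neighbouring house, i.e.
   c(i-2) = c(i-1) = 1 or c(i+1) = c(i+2) = 1.  A configuration is resistant
   exactly when all its lots are fine: a house blocked by building at i must
   be adjacent to i, and resistance already forces maximality.  Fineness
   being local, a left-to-right scan shows that the resistant words are
   those generated, uniquely, by
     S = e | 1 | 11 T | 011 T | 1011 T,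
     T = e | 0 | 01 | 011 T | 0011 T | 01011 T,
   where T is the set of words that may follow a pair 11 and start with an
   empty lot.  Marking houses by x and lots by y, the series G of T satisfies
   G = 1 + y + x y^2 + (x^2 y^3 + x^2 y^4 + x^3 y^5) G, the series of S is
   1 + x y + (x^2 y^2 + x^2 y^3 + x^3 y^4) G, and eliminating G gives the
   claim. *)

From mathcomp Require Import all_boot all_order all_algebra.
From mathcomp Require Import zify ring.
Set Implicit Arguments. Unset Strict Implicit. Unset Printing Implicit Defensive.

Lemma nth_build c i j : nth false (build c i) j = (j == i) || nth false c j.
Proof. by rewrite /build nth_set_nth /=; case: eqP. Qed.

Lemma size_build c i : i < size c -> size (build c i) = size c.
Proof. by rewrite /build size_set_nth => /maxn_idPr. Qed.

Lemma nth_true_size c j : nth false c j -> j < size c.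
Proof. by apply: contraTT; rewrite -leqNgt => /(nth_default false) ->. Qed.

Lemma blocked_size c l : blocked c l -> l < size c.
Proof. by case/and5P=> _ /ltnW. Qed.

Lemma blocked_notpermissible c l : blocked c l -> ~~ permissible c.
Proof.
move=> bl; apply/forallPn; exists (Ordinal (blocked_size bl)).
by rewrite negbK.
Qed.

Lemma blocked_build_left c i :
  1 < i -> i < size c -> nth false c i.-2 -> nth false c i.-1 ->
  blocked (build c i) i.-1.
Proof.
move=> i1 isz c2 c1; rewrite /blocked size_build // !nth_build.
have -> : i.-1.+1 = i by lia.
rewrite eqxx c1 c2 !orbT andbT; apply/andP; split; lia.
Qed.

Lemma blocked_build_right c i :
  nth false c i.+1 -> nth false c i.+2 -> blocked (build c i) i.+1.
Proof.
move=> c1 c2; have isz := nth_true_size c2.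
by rewrite /blocked size_build ?nth_build /= ?eqxx ?c1 ?c2 ?orbT //; lia.
Qed.

Lemma blocked_build_inv c i l :
  ~~ nth false c i -> ~~ blocked c l -> l != i -> blocked (build c i) l ->
  ((1 < i) && nth false c i.-2 && nth false c i.-1)
  || (nth false c i.+1 && nth false c i.+2).
Proof.
move=> ci nbl li; rewrite /blocked !nth_build (negbTE li) /=.
case/and5P=> l0 _ cl cl1 cl2.
have [lSi|] := eqVneq l i.+1.
  move: cl cl2; rewrite lSi; have -> : (i.+2 == i) = false by lia.
  by move=> /= -> ->; rewrite orbT.
have [Sli _|Sli ilS] := eqVneq l.+1 i.
  move: cl1; have -> : (l.-1 == i) = false by lia.
  by rewrite -Sli /= cl andbT; lia.
move: cl1 cl2; have -> : (l.-1 == i) = false by lia.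
rewrite (negbTE Sli) /= => cl1 cl2; move: nbl.
by rewrite /blocked l0 cl cl1 cl2 (nth_true_size cl2).
Qed.

Definition resistant_at (c : seq bool) (i : nat) : bool :=
  ~~ blocked c i &&
  [|| nth false c i, (1 < i) && nth false c i.-2 && nth false c i.-1
    | nth false c i.+1 && nth false c i.+2].

Lemma resistantE c : resistant c = [forall i : 'I_(size c), resistant_at c i].
Proof.
apply/idP/forallP => [/andP [/andP [perm _] res] i | loc].
  have /implyP := forallP res i; rewrite /resistant_at (forallP perm i) /=.
  case ci: (nth false c i) => //= /(_ isT) /existsP [l /andP [li bl]].
  exact: blocked_build_inv (negbT ci) (forallP perm l) li bl.
have perm : permissible c by apply/forallP => i; case/andP: (loc i).
have res (i : 'I_(size c)) : ~~ nth false c i ->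
    [exists l : 'I_(size c), (val l != val i) && blocked (build c i) l].
  move=> ci; case/andP: (loc i) => _; rewrite (negbTE ci) /=.
  case/orP => [/andP [/andP [i1 c2] c1] | /andP [c1 c2]].
    have bl := blocked_build_left i1 (ltn_ord i) c2 c1.
    apply/existsP; exists (Ordinal (leq_ltn_trans (leq_pred i) (ltn_ord i))).
    by rewrite /= bl andbT; lia.
  have bl := blocked_build_right c1 c2.
  apply/existsP; exists (Ordinal (nth_true_size c1)).
  by rewrite /= bl andbT; lia.
rewrite /resistant /maximal perm /=; apply/andP; split; apply/forallP => i;
  apply/implyP => /res // /existsP [l /andP [_ bl]].
exact: blocked_notpermissible bl.
Qed.

(* [scan a b s] checks all lots of s, a and b being the two lots before s;
   [scan_ok a b x y z] is [resistant_at] for a lot x preceded by a b and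
   followed by y z. *)
Definition scan_ok (a b x y z : bool) : bool :=
  ~~ (b && x && y) && [|| x, a && b | y && z].

Fixpoint scan (a b : bool) (s : seq bool) : bool :=
  if s is x :: s' then
    scan_ok a b x (nth false s' 0) (nth false s' 1) && scan b x s'
  else true.

Lemma scan_drop c m : m <= size c ->
  scan ((1 < m) && nth false c m.-2) ((0 < m) && nth false c m.-1) (drop m c)
  = all (resistant_at c) (iota m (size c - m)).
Proof.
move=> msz; move dE: (size c - m) => d.
elim: d m msz dE => [|d IH] m msz dE.
  by have /eqP -> : drop m c == [::] by rewrite -size_eq0 size_drop dE.
rewrite (drop_nth false) /=; last by lia.
rewrite -(IH m.+1) ?nth_drop ?addn0 ?addn1 /=; try lia.
congr (_ && _); rewrite /scan_ok /resistant_at /blocked.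
case cS: (nth false c m.+1); [rewrite (nth_true_size cS)|];
  case: m {msz dE IH cS} => [|m] /=; rewrite ?andbT ?andbF ?orbF //=;
  by case: (nth false c m); case: (nth false c m.+1); rewrite /= ?andbT ?andbF ?orbF.
Qed.

Lemma resistant_scan c : resistant c = scan false false c.
Proof.
rewrite resistantE; have := scan_drop (leq0n (size c)); rewrite drop0 subn0 => ->.
apply/forallP/allP => loc i; last by apply: loc; rewrite mem_iota /=.
by rewrite mem_iota /= => isz; exact: (loc (Ordinal isz)).
Qed.

Fixpoint follows_pair (s : seq bool) : bool :=
  match s with
  | [::] | [:: false] | [:: false; true] => true
  | false :: true :: true :: t => follows_pair t
  | false :: false :: true :: true :: t => follows_pair t
  | false :: true :: false :: true :: true :: t => follows_pair t
  | _ => false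
  end.

Definition resistant_grammar (s : seq bool) : bool :=
  match s with
  | [::] | [:: true] => true
  | true :: true :: t => follows_pair t
  | false :: true :: true :: t => follows_pair t
  | true :: false :: true :: true :: t => follows_pair t
  | _ => false
  end.

Lemma scan_pairE t : ~~ nth false t 0 && scan true true t = follows_pair t.
Proof.
move: {2}(size t).+1 (ltnSn (size t)) => n; elim: n t => // n IH [|[] t] //=.
case: t => [|[] t] //=.
- case: t => [|[] t] //= tn.
  + by rewrite /scan_ok /= ?andbT -IH //=; lia.
  + case: t tn => [|[] t] //=; case: t => [|[] t] //= tn.
    by rewrite /scan_ok /= ?andbT -IH //=; lia.
- case: t => [|[] t] //=; case: t => [|[] t] //= tn.
  by rewrite /scan_ok /= ?andbT -IH //=; lia.
Qed.

Lemma resistant_grammarE c : resistant c = resistant_grammar c.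
Proof.
rewrite resistant_scan.
case: c => [|[] t] //=.
- case: t => [|[] t] //=.
  + by rewrite /scan_ok /= ?andbT -scan_pairE.
  + case: t => [|[] t] //=; case: t => [|[] t] //=.
    by rewrite /scan_ok /= ?andbT -scan_pairE.
- case: t => [|[] t] //=; case: t => [|[] t] //=.
  by rewrite /scan_ok /= ?andbT -scan_pairE.
Qed.

Lemma cons_inj (T : Type) (x : T) : injective (cons x).
Proof. by move=> s t []. Qed.

Fixpoint words (n : nat) : seq (seq bool) :=
  if n is n'.+1 then [seq false :: s | s <- words n'] ++ [seq true :: s | s <- words n']
  else [:: [::]].

Lemma mem_words n s : (s \in words n) = (size s == n).
Proof.
elim: n s => [|n IH] [|b s] //=; rewrite mem_cat.
  by apply/negbTE; rewrite negb_or; apply/andP; split; apply/mapP => -[].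
have cons_notin b' b'' : b' != b'' -> (b'' :: s \in [seq b' :: t | t <- words n]) = false.
  by move=> neq; apply/mapP => -[t _ [eq _]]; rewrite eq eqxx in neq.
by rewrite eqSS -IH; case: b; rewrite (mem_map (@cons_inj _ _)) cons_notin ?orbF.
Qed.

Lemma uniq_words n : uniq (words n).
Proof.
elim: n => [|n IH] //=; rewrite cat_uniq !map_inj_uniq ?IH ?andbT //; try exact: cons_inj.
by apply/hasPn => _ /mapP [s _ ->]; apply/mapP => -[].
Qed.

Definition wcount (p : pred (seq bool)) (k n : nat) : nat :=
  count (fun s => p s && (count id s == k)) (words n).

Lemma card_wcount (p : pred (seq bool)) k n :
  #|[set c : n.-tuple bool | p c && (count id c == k)]| = wcount p k n.
Proof.
rewrite cardsE cardE /enum_mem size_filter -enumT.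
rewrite -(count_map val (fun s => p s && (count id s == k))).
apply/permP/uniq_perm; first by rewrite map_inj_uniq ?enum_uniq //; exact: val_inj.
  exact: uniq_words.
move=> s; rewrite mem_words; apply/mapP/idP => [[t _ ->] | sn].
  by rewrite size_tuple.
by exists (Tuple sn); rewrite ?mem_enum.
Qed.

Lemma eq_wcount p q k n : p =1 q -> wcount p k n = wcount q k n.
Proof. by move=> pq; apply: eq_count => s; rewrite pq. Qed.

Lemma wcount0 p k : wcount p k 0 = p [::] && (k == 0).
Proof. by rewrite /wcount /= addn0 eq_sym. Qed.

Lemma wcountS p k n : wcount p k n.+1 =
  wcount (fun s => p (false :: s)) k n +
  (if k is k'.+1 then wcount (fun s => p (true :: s)) k' n else 0).
Proof.
rewrite /wcount /= count_cat !count_map; congr (_ + _).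
case: k => [|k]; last exact: eq_count.
by apply/eqP; rewrite -leqn0 leqNgt -has_count; apply/hasPn => s _; rewrite /= andbF.
Qed.

Lemma wcount_andl (c : bool) p k n :
  wcount (fun s => c && p s) k n = if c then wcount p k n else 0.
Proof. by case: c => //; apply/eqP; rewrite -leqn0 leqNgt -has_count; apply/hasPn. Qed.

Definition prefixed (w : seq bool) (q : pred (seq bool)) : pred (seq bool) :=
  fun s => (take (size w) s == w) && q (drop (size w) s).

Lemma wcount_prefixed w q k n :
  wcount (prefixed w q) k n =
  if (count id w <= k) && (size w <= n)
  then wcount q (k - count id w) (n - size w) else 0.
Proof.
elim: w k n => [|b w IH] k n.
  by rewrite !subn0; apply: eq_wcount => s; rewrite /prefixed take0 drop0.
case: n => [|n]; first by rewrite wcount0 /prefixed andbF.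
have prefixed_cons b' : prefixed (b :: w) q \o cons b' =1
    (fun s => (b' == b) && prefixed w q s).
  by move=> s; rewrite /prefixed /= eqseq_cons andbA.
rewrite wcountS (eq_wcount _ _ (prefixed_cons false)) wcount_andl.
case: k => [|k]; last rewrite (eq_wcount _ _ (prefixed_cons true)) wcount_andl.
all: by move=> {prefixed_cons}; case: b; rewrite /= ?IH ?addn0 ?add0n ?subSS ?ltnS.
Qed.

Lemma wcount_sum (p : pred (seq bool)) (ps : seq (pred (seq bool))) k n :
  (forall s, (p s : nat) = \sum_(q <- ps) q s) ->
  wcount p k n = \sum_(q <- ps) wcount q k n.
Proof.
move=> split_p; rewrite /wcount; elim: (words n) => [|s l IH] /=.
  by rewrite big1.
rewrite IH big_split /=; congr (_ + _).
case: (count id s == k); last by rewrite andbF big1 // => q _; rewrite andbF.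
by rewrite andbT split_p; apply: eq_bigr => q _; rewrite andbT.
Qed.

Lemma wcount_nil k n : wcount (@nilp bool) k n = (k == 0) && (n == 0).
Proof.
case: n => [|n]; first by rewrite wcount0 andbT.
rewrite wcountS !(@eq_wcount _ pred0) //.
by case: k => [|k]; rewrite /wcount !count_pred0.
Qed.

Definition follows_pair_pieces : seq (pred (seq bool)) :=
  [:: @nilp bool; prefixed [:: false] (@nilp bool);
      prefixed [:: false; true] (@nilp bool);
      prefixed [:: false; true; true] follows_pair;
      prefixed [:: false; false; true; true] follows_pair;
      prefixed [:: false; true; false; true; true] follows_pair].

Definition resistant_pieces : seq (pred (seq bool)) :=
  [:: @nilp bool; prefixed [:: true] (@nilp bool);
      prefixed [:: true; true] follows_pair;
      prefixed [:: false; true; true] follows_pair;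
      prefixed [:: true; false; true; true] follows_pair].

Lemma follows_pair_split s :
  (follows_pair s : nat) = \sum_(q <- follows_pair_pieces) q s.
Proof.
rewrite /follows_pair_pieces !big_cons big_nil /prefixed.
by case: s => [|[] [|[] [|[] [|[] [|[] s]]]]];
  rewrite /nilp /= ?take0 ?drop0 ?eqxx ?add0n ?addn0.
Qed.

Lemma resistant_grammar_split s :
  (resistant_grammar s : nat) = \sum_(q <- resistant_pieces) q s.
Proof.
rewrite /resistant_pieces !big_cons big_nil /prefixed.
by case: s => [|[] [|[] [|[] [|[] [|[] s]]]]];
  rewrite /nilp /= ?take0 ?drop0 ?eqxx ?add0n ?addn0.
Qed.

Import GRing.Theory.
Local Open Scope ring_scope.

Definition mulXY (a b : nat) (f : fps2) : fps2 := fun k n =>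
  if (a <= k)%N && (b <= n)%N then f (k - a)%N (n - b)%N else 0.

Lemma mulXY0 f k n : mulXY 0 0 f k n = f k n.
Proof. by rewrite /mulXY !subn0. Qed.

Lemma mulXY_add a b f g k n :
  mulXY a b (fps_add f g) k n = mulXY a b f k n + mulXY a b g k n.
Proof. by rewrite /mulXY /fps_add; case: ifP; rewrite ?addr0. Qed.

Lemma mulXY_mulXY a b c d f k n :
  mulXY a b (mulXY c d f) k n = mulXY (a + c) (b + d) f k n.
Proof.
rewrite /mulXY; case: (leqP a k) => ak; case: (leqP b n) => bn /=;
  case: (leqP c (k - a)) => ck; case: (leqP d (n - b)) => dn /=;
  case: (leqP (a + c) k) => ack; case: (leqP (b + d) n) => bdn //=; try lia.
by rewrite !subnDA.
Qed.

Lemma mulXY_mono a b c a' b' k n :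
  mulXY a b (mono c a' b') k n = mono c (a + a') (b + b') k n.
Proof.
rewrite /mulXY /mono; case: (leqP a k) => ak; case: (leqP b n) => bn /=;
  case: (eqVneq (k - a)%N a') => ka; case: (eqVneq (n - b)%N b') => nb;
  case: (eqVneq k (a + a')%N) => kaa; case: (eqVneq n (b + b')%N) => nbb //=; lia.
Qed.

Lemma eq_mulXY a b f g :
  (forall k n, f k n = g k n) -> forall k n, mulXY a b f k n = mulXY a b g k n.
Proof. by move=> fg k n; rewrite /mulXY fg. Qed.

Lemma monoE c a b k n : mono c a b k n = c * mono 1 a b k n.
Proof. by rewrite /mono; case: ifP; rewrite ?mulr1 ?mulr0. Qed.

Lemma sum_ord_subn_eq (F : nat -> int) k a :
  \sum_(i < k.+1) (if (k - i == a)%N then F i else 0) =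
  if (a <= k)%N then F (k - a)%N else 0.
Proof.
case: leqP => ak.
  have ka : (k - a < k.+1)%N by lia.
  rewrite (bigD1 (Ordinal ka)) //= ifT; last by apply/eqP; lia.
  rewrite big1 ?addr0 // => i neq; rewrite ifF //; apply/eqP => kia.
  by move/eqP: neq; apply; apply: val_inj => /=; have := ltn_ord i; lia.
by rewrite big1 // => i _; rewrite ifF //; apply/eqP; have := ltn_ord i; lia.
Qed.

Lemma fps_mul_mono f c a b k n : fps_mul f (mono c a b) k n = mulXY a b f k n * c.
Proof.
rewrite /fps_mul (eq_bigr (fun i : 'I_k.+1 => if (k - i == a)%N then
   (if (b <= n)%N then f i (n - b)%N * c else 0) else 0)); last first.
  move=> i _; case: eqP => ki; last first.
    by rewrite big1 // => j _; rewrite /mono; case: eqP; rewrite ?mulr0.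
  rewrite -(sum_ord_subn_eq (fun j => f i j * c)); apply: eq_bigr => j _.
  by rewrite /mono ki eqxx /=; case: eqP; rewrite ?mulr0.
rewrite (sum_ord_subn_eq (fun i => if (b <= n)%N then f i (n - b)%N * c else 0)).
rewrite /mulXY.
by case: (a <= k)%N; case: (b <= n)%N; rewrite ?mul0r.
Qed.

Lemma fps_mulDr f g h k n :
  fps_mul f (fps_add g h) k n = fps_mul f g k n + fps_mul f h k n.
Proof.
rewrite /fps_mul -big_split; apply: eq_bigr => i _.
by rewrite -big_split; apply: eq_bigr => j _; rewrite mulrDr.
Qed.

Lemma eq_fps_mulr f g h :
  (forall k n, g k n = h k n) -> forall k n, fps_mul f g k n = fps_mul f h k n.
Proof. by move=> gh k n; apply: eq_bigr => i _; apply: eq_bigr => j _; rewrite gh. Qed.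

Lemma denom1_mul_denom2 k n : fps_mul denom1 denom2 k n = denom k n.
Proof.
rewrite /denom2 fps_mulDr !fps_mul_mono mulXY0 !mulr1 /denom1 !mulXY_add !mulXY_mono.
by rewrite /denom /fps_add !addnE /= !(monoE (-1)); ring.
Qed.

Lemma mul_denom_eq_numer (G J : fps2) :
  (forall k n, G k n =
     fps_add (mono 1 0 0) (fps_add (mono 1 0 1) (fps_add (mono 1 1 2)
       (fps_add (mulXY 2 3 G) (fps_add (mulXY 2 4 G) (mulXY 3 5 G))))) k n) ->
  (forall k n, J k n =
     fps_add (mono 1 0 0) (fps_add (mono 1 1 1)
       (fps_add (mulXY 2 2 G) (fps_add (mulXY 2 3 G) (mulXY 3 4 G)))) k n) ->
  forall k n, fps_mul J denom k n = numer k n.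
Proof.
move=> G_rec J_rec k n.
(* One more unfolding of each shifted copy of G makes the G terms cancel. *)
have G_shift a b : mulXY a b G k n =
    mono 1 a b k n + (mono 1 a (b + 1) k n + (mono 1 (a + 1) (b + 2) k n +
    (mulXY (a + 2) (b + 3) G k n + (mulXY (a + 2) (b + 4) G k n +
     mulXY (a + 3) (b + 5) G k n)))).
  by rewrite (eq_mulXY _ _ G_rec) !mulXY_add !mulXY_mono !mulXY_mulXY !addn0.
rewrite /denom !fps_mulDr !fps_mul_mono mulXY0 J_rec !(eq_mulXY _ _ J_rec).
rewrite /fps_add !mulXY_add !mulXY_mono !mulXY_mulXY.
rewrite (G_shift 2 2) (G_shift 2 3) (G_shift 3 4).
by rewrite /numer /fps_add !addnE /=; ring.
Qed.

Definition wseries (p : pred (seq bool)) : fps2 := fun k n => Posz (wcount p k n).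

Lemma wseries_prefixed w q k n :
  wseries (prefixed w q) k n = mulXY (count id w) (size w) (wseries q) k n.
Proof. by rewrite /wseries wcount_prefixed /mulXY; case: ifP. Qed.

Lemma wseries_nil k n : wseries (@nilp bool) k n = mono 1 0 0 k n.
Proof. by rewrite /wseries wcount_nil /mono; case: ifP. Qed.

Lemma wseries_sum (p : pred (seq bool)) (ps : seq (pred (seq bool))) k n :
  (forall s, (p s : nat) = (\sum_(q <- ps) q s)%N) ->
  wseries p k n = \sum_(q <- ps) wseries q k n.
Proof.
move=> split_p; rewrite /wseries (wcount_sum _ _ split_p).
by rewrite (big_morph Posz PoszD (erefl _)).
Qed.

Lemma follows_pair_rec k n : wseries follows_pair k n =
  fps_add (mono 1 0 0) (fps_add (mono 1 0 1) (fps_add (mono 1 1 2)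
    (fps_add (mulXY 2 3 (wseries follows_pair))
    (fps_add (mulXY 2 4 (wseries follows_pair))
             (mulXY 3 5 (wseries follows_pair)))))) k n.
Proof.
rewrite (wseries_sum _ _ follows_pair_split) /follows_pair_pieces !big_cons big_nil addr0.
by rewrite wseries_nil !wseries_prefixed !(eq_mulXY _ _ wseries_nil) !mulXY_mono.
Qed.

Lemma JA_series_rec k n : JA_series k n =
  fps_add (mono 1 0 0) (fps_add (mono 1 1 1)
    (fps_add (mulXY 2 2 (wseries follows_pair))
    (fps_add (mulXY 2 3 (wseries follows_pair))
             (mulXY 3 4 (wseries follows_pair))))) k n.
Proof.
have -> : JA_series k n = wseries resistant_grammar k n.
  rewrite /JA_series /wseries /JA -card_wcount; congr (Posz #|pred_of_set _|).
  by apply/setP => c; rewrite !inE resistant_grammarE.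
rewrite (wseries_sum _ _ resistant_grammar_split) /resistant_pieces !big_cons big_nil addr0.
by rewrite wseries_nil !wseries_prefixed !(eq_mulXY _ _ wseries_nil) !mulXY_mono.
Qed.

Theorem mainTheorem5 :
  (forall k n, fps_mul JA_series denom k n = numer k n) /\
  (forall k n, fps_mul JA_series (fps_mul denom1 denom2) k n = numer k n).
Proof.
have JA_mul_denom := mul_denom_eq_numer follows_pair_rec JA_series_rec.
split=> k n; first exact: JA_mul_denom.
by rewrite (eq_fps_mulr _ denom1_mul_denom2).
Qed.
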